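(* There are only finitely many positive integers $n$ for which $\left\lfloor n^{30}/1116 \right\rfloor$ is prime. *)

From mathcomp Require Import all_boot.

From mathcomp Require Import all_boot zify cyclic.

(* Write y := n ^ 15, so that n ^ 30 = y ^ 2 = 1116 q + r with q the quotient
   and r the remainder.  Since 1116 = 4 * 9 * 31, and n ^ 30 is 0 or 1 modulo 8,
   0 modulo 27 or 1 modulo 9, and 0 or 1 modulo 31 (Euler), r is one of eight
   residues.  For five of them the congruences force 2 or 3 to divide q.  The
   other three, 0, 1 and 900, are squares s ^ 2, and then 1116 q = (y - s) (y + s)
   with q prime forces y <= 1116 + s, which fails as soon as n >= 2. *)

Lemma sqr_odd_mod8 y : odd y -> y ^ 2 = 1 %[mod 8].
Proof.
have y8_lt8 : y %% 8 < 8 by rewrite ltn_pmod.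
rewrite -modnXm -(odd_mod y (erefl : odd 8 = false)); move: (y %% 8) y8_lt8 => r.
by case: r => [|[|[|[|[|[|[|[|r]]]]]]]].
Qed.

Lemma expn30_mod8 n : 8 %| n ^ 30 \/ n ^ 30 = 1 %[mod 8].
Proof.
have [odd_n | even_n] := boolP (odd n); [right | left].
  by rewrite (_ : 30 = 2 * 15) // expnM -modnXm sqr_odd_mod8 // exp1n.
have two_n : 2 %| n by rewrite dvdn2.
exact: dvdn_trans (dvdn_exp2l 2 (isT : 3 <= 30)) (dvdn_exp2r 30 two_n).
Qed.

Lemma pfactor_dvd_or_expn_mod p e f k n :
  prime p -> 0 < e -> f <= k -> totient (p ^ e) %| k ->
  p ^ f %| n ^ k \/ n ^ k = 1 %[mod p ^ e].
Proof.
move=> p_pr e_gt0 f_le_k /dvdnP[j k_eq].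
have [p_n | p'n] := boolP (p %| n); [left | right].
  exact: dvdn_trans (dvdn_exp2l p f_le_k) (dvdn_exp2r _ p_n).
have n_coprime : coprime n (p ^ e) by rewrite coprime_pexpr // coprime_sym prime_coprime.
by rewrite k_eq mulnC expnM -modnXm Euler_exp_totient // modnXm exp1n.
Qed.

Lemma prime_mul_add_sqr_le q m s y :
  prime q -> y ^ 2 = q * m + s ^ 2 -> y <= m + s.
Proof.
move=> q_pr sqr_eq.
have [y_le_s | s_lt_y] := leqP y s; first exact: leq_trans y_le_s (leq_addl m s).
have cofactor_le a b : q %| a -> 0 < a -> a * b = q * m -> b <= m.
  move=> /dvdnP[t ->]; rewrite muln_gt0 => /andP[t_gt0 _].
  rewrite mulnAC mulnC => /eqP; rewrite eqn_pmul2l ?prime_gt0 // => /eqP <-.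
  by rewrite leq_pmull.
have factor_eq : (y - s) * (y + s) = q * m by rewrite -subn_sqr sqr_eq addnK.
have : q %| (y - s) * (y + s) by rewrite factor_eq dvdn_mulr.
rewrite Euclid_dvdM // => /orP[q_dvd | q_dvd].
- have : y + s <= m by apply: cofactor_le q_dvd _ factor_eq; rewrite subn_gt0.
  lia.
- have : y - s <= m by apply: cofactor_le q_dvd _ _; [lia | rewrite mulnC].
  lia.
Qed.

Lemma expn30_div1116_cases n :
  [\/ 2 %| n ^ 30 %/ 1116, 3 %| n ^ 30 %/ 1116
    | exists2 s, s <= 30 & n ^ 30 %% 1116 = s ^ 2].
Proof.
have mod8 := expn30_mod8 n.
have mod9 : 3 ^ 3 %| n ^ 30 \/ n ^ 30 = 1 %[mod 3 ^ 2].
  exact: pfactor_dvd_or_expn_mod.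
have mod31 : 31 ^ 1 %| n ^ 30 \/ n ^ 30 = 1 %[mod 31 ^ 1].
  exact: pfactor_dvd_or_expn_mod.
have : 2 %| n ^ 30 %/ 1116 \/ 3 %| n ^ 30 %/ 1116 \/
       n ^ 30 %% 1116 = 0 \/ n ^ 30 %% 1116 = 1 \/ n ^ 30 %% 1116 = 900.
  by move: (n ^ 30) mod8 mod9 mod31 => x; lia.
case=> [two | [three | r_sqr]]; [exact: Or31 | exact: Or32 | apply: Or33].
by case: r_sqr => [-> | [-> | ->]]; [exists 0 | exists 1 | exists 30].
Qed.

Theorem theorem8 :
  exists N : nat, forall n : nat, 0 < n -> prime (n ^ 30 %/ 1116) -> n <= N.
Proof.
exists 1 => n _ q_pr; rewrite leqNgt; apply/negP => n_gt1.
have y_big : 1146 < n ^ 15.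
  by apply: leq_trans (_ : 1146 < 2 ^ 15) _; rewrite ?leq_exp2r.
have sqr_y : (n ^ 15) ^ 2 = n ^ 30 by rewrite -expnM.
have q_gt3 : 3 < n ^ 30 %/ 1116 by rewrite leq_divRL // -sqr_y; nia.
case: (expn30_div1116_cases n) => [two | three | [s s_le30 r_eq]].
- by move/(@prime_nt_dvdP 2 _ q_pr isT): two q_gt3 => <-.
- by move/(@prime_nt_dvdP 3 _ q_pr isT): three q_gt3 => <-.
- have : n ^ 15 <= 1116 + s.
    by apply: prime_mul_add_sqr_le q_pr _; rewrite sqr_y -r_eq -divn_eq.
  lia.
Qed.
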